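(* For every circular arc graph $G$, $\operatorname{box}(G)\le 2\omega(G)+1\le 2\Delta(G)+3$.
   Context: A graph $G$ is a circular arc graph if its vertices can be put in one-to-one correspondence with a set of arcs of a circle so that two vertices are adjacent iff their arcs intersect. $\omega(G)$ is the clique number and $\Delta(G)$ the maximum degree. The boxicity $\operatorname{box}(G)$ is the minimum $b$ such that $G$ is the intersection graph of axis-parallel boxes in $\mathbb{R}^b$ (products of $b$ closed intervals), one box per vertex. *)

From mathcomp Require Import all_boot.
From Stdlib Require Import Reals Lra ZArith ClassicalEpsilon.

Set Implicit Arguments.
Unset Strict Implicit.
Unset Printing Implicit Defensive.

Definition simple_graph (T : finType) (e : rel T) : Prop :=
  symmetric e /\ irreflexive e.

(* The circle is R / Z (circumference 1).  A (closed) arc is a pair (a, l)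
   with 0 <= l <= 1: it consists of the points x (mod 1) with
   a <= x + k <= a + l for some integer k. *)
Definition arc := (R * R)%type.

Definition valid_arc (A : arc) : Prop := (0 <= A.2 <= 1)%R.

Definition on_arc (A : arc) (x : R) : Prop :=
  exists k : Z, (A.1 <= x + IZR k <= A.1 + A.2)%R.

Definition arcs_intersect (A B : arc) : Prop :=
  exists x : R, on_arc A x /\ on_arc B x.

Definition circular_arc_graph (T : finType) (e : rel T) : Prop :=
  exists f : T -> arc,
    (forall v, valid_arc (f v)) /\
    (forall u v, u != v -> (e u v <-> arcs_intersect (f u) (f v))).

Definition box_rep (T : finType) (e : rel T) (b : nat)
    (lo hi : T -> 'I_b -> R) : Prop :=
  (forall v i, (lo v i <= hi v i)%R) /\
  (forall u v, u != v ->
     (e u v <-> forall i, (lo u i <= hi v i)%R /\ (lo v i <= hi u i)%R)).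

Definition has_box_rep (T : finType) (e : rel T) (b : nat) : Prop :=
  exists lo hi : T -> 'I_b -> R, box_rep e lo hi.

Definition has_box_repb (T : finType) (e : rel T) : pred nat :=
  fun b => if excluded_middle_informative (has_box_rep e b) then true else false.

Lemma has_box_rep_card (T : finType) (e : rel T) :
  symmetric e -> irreflexive e -> has_box_rep e #|T|.
Proof.
move=> esym eirr.
exists (fun v i => if v == enum_val i then 1%R else 0%R).
exists (fun v i => if v == enum_val i then 1%R
                   else if e (enum_val i) v then 1%R else 0%R).
split.
  move=> v i; case: (v == enum_val i); first lra.
  case: (e _ v); lra.
move=> u v huv; split.
  move=> euv i; split.
  - case: ifP => [/eqP hu|_]; last by case: ifP => _; [|case: ifP => _]; lra.
    rewrite -hu eq_sym (negbTE huv) euv /=; lra.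
  - case: ifP => [/eqP hv|_]; last by case: ifP => _; [|case: ifP => _]; lra.
    rewrite -hv (negbTE huv) esym euv /=; lra.
move=> H; apply/negPn/negP => neuv.
have [H2 _] := H (enum_rank u).
move: H2; rewrite enum_rankK eqxx.
have -> : (v == u) = false by apply/eqP=> h; move: huv; rewrite h eqxx.
by rewrite (negbTE neuv) => /= ?; lra.
Qed.

Lemma has_box_repbP (T : finType) (e : rel T) b :
  has_box_repb e b <-> has_box_rep e b.
Proof. by rewrite /has_box_repb; case: excluded_middle_informative. Qed.

(* Every
   finite simple graph has one in dimension #|T| (has_box_rep_card); the
   disjunct (b == #|T|) only serves to make ex_minn total for arbitrary
   relations and does not change the value on simple graphs (see
   boxicity_spec below). *)
Lemma ex_box_rep (T : finType) (e : rel T) :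
  exists b, has_box_repb e b || (b == #|T|).
Proof. by exists #|T|; rewrite eqxx orbT. Qed.

Definition boxicity (T : finType) (e : rel T) : nat := ex_minn (ex_box_rep e).

Lemma boxicity_spec (T : finType) (e : rel T) :
  simple_graph e ->
  has_box_rep e (boxicity e) /\
  forall b, has_box_rep e b -> boxicity e <= b.
Proof.
move=> [es ei]; rewrite /boxicity; case: ex_minnP => m Hm Hmin; split.
  case/orP: Hm => [/has_box_repbP //|/eqP ->]; exact: has_box_rep_card.
by move=> b /has_box_repbP hb; apply: Hmin; rewrite hb.
Qed.

Definition is_clique (T : finType) (e : rel T) (A : {set T}) : bool :=
  [forall u in A, forall v in A, (u != v) ==> e u v].

Definition clique_number (T : finType) (e : rel T) : nat :=
  \max_(A : {set T} | is_clique e A) #|A|.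

Definition degree (T : finType) (e : rel T) (v : T) : nat :=
  #|[set u | e v u]|.

Definition max_degree (T : finType) (e : rel T) : nat :=
  \max_(v : T) degree e v.

From Stdlib Require Import Reals Lra Lia ClassicalEpsilon.
From Pilot Require Import Defs.
From mathcomp Require Import all_boot zify.

Set Implicit Arguments.
Unset Strict Implicit.
Unset Printing Implicit Defensive.

(* Cut the circle at the point 0.  The arcs through 0 form a clique C, and the
   other arcs are intervals of (0, 1); giving every arc of C the whole of
   [0, 1] yields an interval supergraph G_0 of G in which C is universal.  For
   c in C, the graph G_c whose only non-edges are those of G at c is an
   interval graph as well (c gets {0}, its neighbours [0, 1], the rest {1}).
   G is the intersection of G_0 and the G_c, so box G <= |C| + 1 <= omega + 1,
   and omega <= Delta + 1 because a clique lies in the closed neighbourhood of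
   any of its vertices. *)

Section ArcGeometry.
Local Open Scope R_scope.

Definition arc_start (A : Defs.arc) : R := frac_part A.1.

Lemma arc_start_bounds A : 0 <= arc_start A < 1.
Proof. by have [] := base_fp A.1; rewrite /arc_start; lra. Qed.

Lemma on_arcE A x :
  on_arc A x <-> exists k : Z, arc_start A <= x + IZR k <= arc_start A + A.2.
Proof.
rewrite /on_arc /arc_start /frac_part; split=> -[k Hk].
- by exists (k - Int_part A.1)%Z; rewrite minus_IZR; lra.
- by exists (k + Int_part A.1)%Z; rewrite plus_IZR; lra.
Qed.

Lemma arc_off0_inside A :
  valid_arc A -> ~ on_arc A 0 -> 0 < arc_start A /\ arc_start A + A.2 < 1.
Proof.
move=> vA; rewrite on_arcE => A0.
have := arc_start_bounds A; rewrite /valid_arc in vA.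
split; apply: Rnot_le_lt => h; apply: A0.
- by exists 0%Z; lra.
- by exists 1%Z; lra.
Qed.

Lemma arcs_intersect_off0 A B : valid_arc A -> valid_arc B ->
  ~ on_arc A 0 -> ~ on_arc B 0 ->
  arcs_intersect A B <->
  arc_start A <= arc_start B + B.2 /\ arc_start B <= arc_start A + A.2.
Proof.
move=> vA vB A0 B0.
have [? ?] := arc_off0_inside vA A0; have [? ?] := arc_off0_inside vB B0.
rewrite /valid_arc in vA vB; split.
- move=> [x [/on_arcE [k xA] /on_arcE [l xB]]].
  suff kl : k = l by subst; lra.
  (* x + k and x + l both lie in (0, 1). *)
  have kl : IZR (k - l) < 1 by rewrite minus_IZR; lra.
  have lk : IZR (l - k) < 1 by rewrite minus_IZR; lra.
  by move/lt_IZR: kl; move/lt_IZR: lk; lia.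
- move=> overlap; exists (Rmax (arc_start A) (arc_start B)).
  by split; apply/on_arcE; exists 0%Z; rewrite Rplus_0_r /Rmax;
    case: Rle_dec; lra.
Qed.

End ArcGeometry.

Section IntervalRepresentations.
Local Open Scope R_scope.

Definition interval_rep (T : finType) (r : rel T) (lo hi : T -> R) : Prop :=
  (forall v, lo v <= hi v) /\
  (forall u v, u != v -> (r u v <-> lo u <= hi v /\ lo v <= hi u)).

Definition interval_graph (T : finType) (r : rel T) : Prop :=
  exists lo hi : T -> R, interval_rep r lo hi.

Lemma has_box_rep_interval_meet (T I : finType) (e : rel T) (r : I -> rel T) :
  (forall i, interval_graph (r i)) ->
  (forall u v, u != v -> (e u v <-> forall i, r i u v)) ->
  has_box_rep e #|I|.
Proof.
move=> r_int eE.
have [lohi rep] : exists lohi : I -> (T -> R) * (T -> R),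
    forall i, interval_rep (r i) (lohi i).1 (lohi i).2.
  apply: (ClassicalEpsilon.choice
           (fun i lohi => interval_rep (r i) lohi.1 lohi.2)).
  by move=> i; have [lo [hi rep]] := r_int i; exists (lo, hi).
exists (fun v k => (lohi (enum_val k)).1 v).
exists (fun v k => (lohi (enum_val k)).2 v).
split=> [v k|u v uv]; first exact: (rep _).1.
rewrite eE //; split=> [ruv k|H i]; first exact/(rep _).2.
by rewrite -(enum_rankK i); apply/(rep _).2 => //; apply: H.
Qed.

Definition costar (T : finType) (e : rel T) (c : T) : rel T :=
  fun u v => ((u != c) && (v != c)) || e u v.

Lemma costar_interval_graph (T : finType) (e : rel T) (c : T) :
  symmetric e -> interval_graph (costar e c).
Proof.
move=> esym; exists (fun v => if (v == c) || e c v then 0 else 1).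
exists (fun v => if v == c then 0 else 1).
split=> [v|u v]; first by case: ifP; case: ifP => //; lra.
rewrite /costar.
case: (u =P c) => [->|_]; case: (v =P c) => [->|_]; rewrite ?eqxx //= => _.
- by case: (e c v); split=> // *; lra.
- by rewrite esym; case: (e c u); split=> // *; lra.
- by split=> // _; split; case: ifP => _; lra.
Qed.

Definition universalize (T : finType) (e : rel T) (C : {set T}) : rel T :=
  fun u v => [|| u \in C, v \in C | e u v].

Lemma has_box_rep_universalize (T : finType) (e : rel T) (C : {set T}) :
  symmetric e -> interval_graph (universalize e C) -> has_box_rep e #|C|.+1.
Proof.
move=> esym C_int; rewrite -card_sig -card_option.
pose r (i : option {c | c \in C}) :=
  if i is Some c then costar e (val c) else universalize e C.
apply: (@has_box_rep_interval_meet _ _ _ r).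
  by case=> [c|] //; apply: costar_interval_graph.
move=> u v uv; split=> [euv [c|]|H].
- by rewrite /r /costar euv orbT.
- by rewrite /r /universalize euv !orbT.
- case Cu: (u \in C).
    by have := H (Some (exist _ u Cu)); rewrite /r /costar /= eqxx.
  case Cv: (v \in C).
    by have := H (Some (exist _ v Cv)); rewrite /r /costar /= eqxx andbF.
  by have := H None; rewrite /r /universalize Cu Cv.
Qed.

End IntervalRepresentations.

Definition asbool (P : Prop) : bool :=
  if excluded_middle_informative P then true else false.

Lemma asboolP (P : Prop) : reflect P (asbool P).
Proof.
by rewrite /asbool; case: excluded_middle_informative => h; constructor.
Qed.

Section CircularArcModel.
Local Open Scope R_scope.

Variables (T : finType) (e : rel T) (f : T -> Defs.arc).
Hypothesis f_valid : forall v, valid_arc (f v).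
Hypothesis f_rep : forall u v, u != v -> (e u v <-> arcs_intersect (f u) (f v)).

Definition arcs_through0 : {set T} := [set v | asbool (on_arc (f v) 0)].

Lemma arcs_through0P v : reflect (on_arc (f v) 0) (v \in arcs_through0).
Proof. by rewrite inE; apply: asboolP. Qed.

Lemma arcs_through0_clique : is_clique e arcs_through0.
Proof.
apply/forallP=> u; apply/implyP=> /arcs_through0P u0.
apply/forallP=> v; apply/implyP=> /arcs_through0P v0.
by apply/implyP=> uv; apply/f_rep => //; exists 0.
Qed.

Lemma arcs_through0_interval_graph :
  interval_graph (universalize e arcs_through0).
Proof.
have inside v : ~ on_arc (f v) 0 ->
    0 < arc_start (f v) /\ 0 <= (f v).2 /\ arc_start (f v) + (f v).2 < 1.
  move=> nv; have [? ?] := arc_off0_inside (f_valid v) nv.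
  by have := f_valid v; rewrite /valid_arc; repeat split; lra.
exists (fun v => if v \in arcs_through0 then 0 else arc_start (f v)).
exists (fun v => if v \in arcs_through0 then 1 else arc_start (f v) + (f v).2).
split=> [v|u v uv].
  by case: (arcs_through0P v) => [_|/inside]; lra.
rewrite /universalize.
case: (arcs_through0P u) => [_|nu]; case: (arcs_through0P v) => [_|nv] /=.
- by split=> // _; lra.
- by have := inside v nv; split=> // _; split; lra.
- by have := inside u nu; split=> // _; split; lra.
- by rewrite f_rep //; apply: arcs_intersect_off0.
Qed.

End CircularArcModel.

Section CliquesAndDegrees.
Variables (T : finType) (e : rel T).

Lemma clique_card_leq (A : {set T}) : is_clique e A -> #|A| <= clique_number e.
Proof. exact: (leq_bigmax_cond (F := fun A : {set T} => #|A|)). Qed.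

Lemma clique_number_leq_max_degree : clique_number e <= (max_degree e).+1.
Proof.
apply/bigmax_leqP => A /forallP cl.
have [->|[v vA]] := set_0Vmem A; first by rewrite cards0.
have sub : A \subset v |: [set u | e v u].
  apply/subsetP => u uA; rewrite !inE; have [//|uv] := eqVneq u v.
  by have /forallP/(_ u) := implyP (cl v) vA; rewrite uA eq_sym uv.
apply: leq_trans (subset_leq_card sub) _.
rewrite cardsU1 -add1n leq_add ?leq_b1 //.
exact: (leq_bigmax (F := degree e) v).
Qed.

End CliquesAndDegrees.

Theorem theorem6 (T : finType) (e : rel T) :
  simple_graph e -> circular_arc_graph e ->
  (boxicity e <= (clique_number e).*2.+1 <= (max_degree e).*2 + 3)%N.
Proof.
move=> sg [f [f_valid f_rep]]; have [esym _] := sg.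
have box : has_box_rep e #|arcs_through0 f|.+1.
  exact/(has_box_rep_universalize esym)/arcs_through0_interval_graph.
have omega := clique_card_leq (arcs_through0_clique f_rep).
have boxicity_le := (boxicity_spec sg).2 _ box.
have delta := clique_number_leq_max_degree e.
apply/andP; split; lia.
Qed.
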